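(* Let $f$ be a homeomorphism of a compact metric space $(X,d)$ with the L-shadowing property. Then for every $\epsilon>0$ there exists $\delta>0$ such that for every $x\in X$: if $V^s_\epsilon(x)\cap V^u_\epsilon(x)=\{x\}$ then $\Gamma_\delta(x)=\{x\}$.
   Context: L-shadowing: for every $\varepsilon>0$ there is $\delta>0$ such that every sequence $(x_k)_{k\in\mathbb{Z}}$ with $d(f(x_k),x_{k+1})\le\delta$ for all $k$ and $d(f(x_k),x_{k+1})\to0$ as $|k|\to\infty$ admits $z$ with $d(f^k(z),x_k)\le\varepsilon$ for all $k$ and $d(f^k(z),x_k)\to0$ as $|k|\to\infty$. $W^s_\epsilon(x)=\{y: d(f^n(x),f^n(y))\le\epsilon\ \forall n\ge0\}$, $W^u_\epsilon(x)=\{y: d(f^{-n}(x),f^{-n}(y))\le\epsilon\ \forall n\ge0\}$, $W^s(x)=\{y: d(f^n(x),f^n(y))\to0\ (n\to+\infty)\}$, $W^u(x)=\{y: d(f^{-n}(x),f^{-n}(y))\to0\ (n\to+\infty)\}$, $V^s_\epsilon(x)=W^s(x)\cap W^s_\epsilon(x)$, $V^u_\epsilon(x)=W^u(x)\cap W^u_\epsilon(x)$. Dynamical ball: $\Gamma_\delta(x)=\{y\in X: d(f^n(x),f^n(y))\le\delta\ \forall n\in\mathbb{Z}\}$. *)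

From Stdlib Require Import Reals Lra.
Open Scope R_scope.

Definition is_metric {X : Type} (d : X -> X -> R) : Prop :=
  (forall x y, 0 <= d x y) /\
  (forall x y, d x y = 0 <-> x = y) /\
  (forall x y, d x y = d y x) /\
  (forall x y z, d x z <= d x y + d y z).

Definition open_set {X : Type} (d : X -> X -> R) (U : X -> Prop) : Prop :=
  forall x, U x -> exists r, 0 < r /\ forall y, d x y < r -> U y.

Definition compact_space {X : Type} (d : X -> X -> R) : Prop :=
  forall (I : Type) (U : I -> X -> Prop),
    (forall i, open_set d (U i)) ->
    (forall x, exists i, U i x) ->
    exists l : list I, forall x, exists i, List.In i l /\ U i x.

Definition continuous_map {X : Type} (d : X -> X -> R) (f : X -> X) : Prop :=
  forall x eps, 0 < eps -> exists del, 0 < del /\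
    forall y, d x y < del -> d (f x) (f y) < eps.

Definition homeomorphism {X : Type} (d : X -> X -> R) (f g : X -> X) : Prop :=
  continuous_map d f /\ continuous_map d g /\
  (forall x, g (f x) = x) /\ (forall x, f (g x) = x).

Fixpoint iter {X : Type} (h : X -> X) (n : nat) (x : X) : X :=
  match n with O => x | S m => h (iter h m x) end.

Definition zpow {X : Type} (f g : X -> X) (k : Z) (x : X) : X :=
  match k with
  | Z0 => x
  | Zpos p => iter f (Pos.to_nat p) x
  | Zneg p => iter g (Pos.to_nat p) x
  end.

Definition tends0_Z (a : Z -> R) : Prop :=
  forall eps, 0 < eps -> exists N : nat, forall k : Z,
    (Z.of_nat N <= Z.abs k)%Z -> Rabs (a k) < eps.

Definition tends0_N (a : nat -> R) : Prop :=
  forall eps, 0 < eps -> exists N : nat, forall n, (N <= n)%nat -> Rabs (a n) < eps.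

Definition L_shadowing {X : Type} (d : X -> X -> R) (f g : X -> X) : Prop :=
  forall eps, 0 < eps -> exists del, 0 < del /\
    forall xs : Z -> X,
      (forall k, d (f (xs k)) (xs (k + 1)%Z) <= del) ->
      tends0_Z (fun k => d (f (xs k)) (xs (k + 1)%Z)) ->
      exists z, (forall k, d (zpow f g k z) (xs k) <= eps) /\
                tends0_Z (fun k => d (zpow f g k z) (xs k)).

Definition Ws_eps {X : Type} (d : X -> X -> R) (f : X -> X) (eps : R) (x y : X) : Prop :=
  forall n : nat, d (iter f n x) (iter f n y) <= eps.
Definition Wu_eps {X : Type} (d : X -> X -> R) (g : X -> X) (eps : R) (x y : X) : Prop :=
  forall n : nat, d (iter g n x) (iter g n y) <= eps.
Definition Ws {X : Type} (d : X -> X -> R) (f : X -> X) (x y : X) : Prop :=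
  tends0_N (fun n => d (iter f n x) (iter f n y)).
Definition Wu {X : Type} (d : X -> X -> R) (g : X -> X) (x y : X) : Prop :=
  tends0_N (fun n => d (iter g n x) (iter g n y)).

Definition Vs_eps {X : Type} (d : X -> X -> R) (f : X -> X) (eps : R) (x y : X) : Prop :=
  Ws d f x y /\ Ws_eps d f eps x y.
Definition Vu_eps {X : Type} (d : X -> X -> R) (g : X -> X) (eps : R) (x y : X) : Prop :=
  Wu d g x y /\ Wu_eps d g eps x y.

Definition Gamma {X : Type} (d : X -> X -> R) (f g : X -> X) (del : R) (x y : X) : Prop :=
  forall k : Z, d (zpow f g k x) (zpow f g k y) <= del.

(* Let y lie in the dynamical ball of x of small radius, and pick limit points
   (p1, q1) of the backward orbits of (x, y) and (p2, q2) of the forward ones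
   along common subsequences; then d(p1, q1) and d(q2, p2) are small.
   L-shadowing connects p1 to q1 and q2 to p2 by points whose orbits are
   backward asymptotic to the first point and forward asymptotic to the second.
   Gluing the orbit of x, a long segment of the first connection, the orbit of
   y, a long segment of the second connection and again the orbit of x gives a
   pseudo-orbit with finitely many arbitrarily small jumps, which coincides
   with the orbit of x far away and passes through y at time 0. Its L-shadowing
   point is eps-close to the orbit of x and asymptotic to it in both time
   directions, hence equals x; so d(y, x) is bounded by the arbitrarily small
   shadowing precision, i.e. y = x. *)

From Stdlib Require Import Reals Lra Lia ZArith List Classical.
Open Scope R_scope.

Section Dynamics.

Variables (X : Type) (d : X -> X -> R) (f g : X -> X).

Hypothesis d_metric : is_metric d.

Lemma dist_ge0 x y : 0 <= d x y.
Proof. apply d_metric. Qed.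

Lemma dist_xx x : d x x = 0.
Proof. now apply d_metric. Qed.

Lemma dist_eq0 x y : d x y = 0 -> x = y.
Proof. apply d_metric. Qed.

Lemma dist_sym x y : d x y = d y x.
Proof. apply d_metric. Qed.

Lemma dist_triangle x y z : d x z <= d x y + d y z.
Proof. apply d_metric. Qed.

Lemma zpow_of_nat n u : zpow f g (Z.of_nat n) u = iter f n u.
Proof. destruct n; [reflexivity|]. cbn [Z.of_nat zpow]. now rewrite SuccNat2Pos.id_succ. Qed.

Lemma zpow_opp_of_nat n u : zpow f g (- Z.of_nat n) u = iter g n u.
Proof. destruct n; [reflexivity|]. cbn [Z.of_nat Z.opp zpow]. now rewrite SuccNat2Pos.id_succ. Qed.

Hypothesis fgK : forall x, f (g x) = x.
Hypothesis gfK : forall x, g (f x) = x.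

Lemma zpow_succ k u : zpow f g (k + 1) u = f (zpow f g k u).
Proof.
  destruct (Z_le_gt_dec 0 k) as [Hk|Hk].
  - replace k with (Z.of_nat (Z.to_nat k)) by lia.
    replace (Z.of_nat (Z.to_nat k) + 1)%Z with (Z.of_nat (S (Z.to_nat k))) by lia.
    now rewrite !zpow_of_nat.
  - replace k with (- Z.of_nat (S (Z.to_nat (- k - 1))))%Z by lia.
    replace (- Z.of_nat (S (Z.to_nat (- k - 1))) + 1)%Z
      with (- Z.of_nat (Z.to_nat (- k - 1)))%Z by lia.
    rewrite !zpow_opp_of_nat. cbn [iter]. now rewrite fgK.
Qed.

Lemma zpow_pred k u : zpow f g (k - 1) u = g (zpow f g k u).
Proof.
  replace (zpow f g k u) with (zpow f g ((k - 1) + 1) u) by (f_equal; lia).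
  now rewrite zpow_succ, gfK.
Qed.

Lemma zpow_add a b u : zpow f g (a + b) u = zpow f g a (zpow f g b u).
Proof.
  induction a as [|a IH|a IH] using Z.peano_ind; [reflexivity| |].
  - rewrite <- Z.add_1_r. replace (a + 1 + b)%Z with ((a + b) + 1)%Z by lia.
    now rewrite !zpow_succ, IH.
  - rewrite <- Z.sub_1_r. replace (a - 1 + b)%Z with ((a + b) - 1)%Z by lia.
    now rewrite !zpow_pred, IH.
Qed.

Lemma zpow_shift k T u : zpow f g k u = zpow f g (k - T) (zpow f g T u).
Proof. rewrite <- zpow_add. f_equal. lia. Qed.

Definition orbit_through (w : X) (T k : Z) : X := zpow f g (k - T) w.

Lemma orbit_through_succ w T k :
  f (orbit_through w T k) = orbit_through w T (k + 1).
Proof.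
  unfold orbit_through. replace (k + 1 - T)%Z with ((k - T) + 1)%Z by lia.
  now rewrite zpow_succ.
Qed.

Lemma iter_continuous_upto h : continuous_map d h ->
  forall n a s, 0 < s -> exists r, 0 < r /\ forall b, d a b < r ->
    forall m, (m <= n)%nat -> d (iter h m a) (iter h m b) < s.
Proof.
  intros Hh n. induction n as [|n IH]; intros a s Hs.
  - exists s; split; auto. intros b Hb m Hm.
    replace m with 0%nat by lia. exact Hb.
  - destruct (Hh (iter h n a) s Hs) as [e [He Hhe]].
    destruct (IH a (Rmin s e) (Rmin_pos _ _ Hs He)) as [r [Hr Hrr]].
    exists r; split; auto. intros b Hb m Hm.
    destruct (Nat.eq_dec m (S n)) as [->|Hne].
    + apply Hhe. eapply Rlt_le_trans; [apply (Hrr b Hb n); lia| apply Rmin_r].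
    + eapply Rlt_le_trans; [apply (Hrr b Hb m); lia| apply Rmin_l].
Qed.

Hypothesis f_cont : continuous_map d f.
Hypothesis g_cont : continuous_map d g.

Lemma zpow_continuous_upto K a s : 0 < s -> exists r, 0 < r /\ forall b, d a b < r ->
  forall m, (Z.abs m <= Z.of_nat K)%Z -> d (zpow f g m a) (zpow f g m b) < s.
Proof.
  intros Hs.
  destruct (iter_continuous_upto f f_cont K a s Hs) as [r1 [Hr1 H1]].
  destruct (iter_continuous_upto g g_cont K a s Hs) as [r2 [Hr2 H2]].
  exists (Rmin r1 r2); split; [now apply Rmin_pos|].
  intros b Hb m Hm.
  assert (Hb1 : d a b < r1) by (eapply Rlt_le_trans; [exact Hb| apply Rmin_l]).
  assert (Hb2 : d a b < r2) by (eapply Rlt_le_trans; [exact Hb| apply Rmin_r]).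
  destruct m as [|p|p]; cbn [Z.abs] in Hm.
  - exact (H1 b Hb1 0%nat (Nat.le_0_l _)).
  - apply H1; auto. pose proof (positive_nat_Z p). lia.
  - apply H2; auto. pose proof (positive_nat_Z p). lia.
Qed.

Hypothesis X_compact : compact_space d.

Lemma fold_Rmin_pos_le {A} (F : A -> R) (l : list A) : (forall a, In a l -> 0 < F a) ->
  0 < fold_right (fun a acc => Rmin (F a) acc) 1 l /\
  forall a, In a l -> fold_right (fun a acc => Rmin (F a) acc) 1 l <= F a.
Proof.
  induction l as [|x l IH]; intros Hpos; simpl.
  - split; [lra| intros a []].
  - destruct IH as [IH1 IH2]. { intros a Ha; apply Hpos; simpl; auto. }
    split.
    + apply Rmin_pos; [apply Hpos; simpl|]; auto.
    + intros a [<-|Ha]; [apply Rmin_l|].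
      eapply Rle_trans; [apply Rmin_r| auto].
Qed.

Lemma fold_max_ge {A} (F : A -> nat) (l : list A) a : In a l ->
  (F a <= fold_right (fun a acc => Nat.max (F a) acc) 0 l)%nat.
Proof.
  induction l as [|x l IH]; simpl; intros Ha; [destruct Ha|].
  destruct Ha as [<-|Ha]; [lia| specialize (IH Ha); lia].
Qed.

(* [S r j] reads "index j is admissible at scale r"; the cluster point is
   approached by admissible indices at every scale. *)
Lemma cluster_point_along (S : R -> nat -> Prop) :
  (forall r r' j, r <= r' -> S r j -> S r' j) ->
  (forall r N, 0 < r -> exists j, (N <= j)%nat /\ S r j) ->
  forall b : nat -> X,
  exists q, forall r N, 0 < r -> exists j, (N <= j)%nat /\ S r j /\ d (b j) q < r.
Proof.
  intros Smono Sinf b.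
  apply NNPP. intro Hno.
  (* Otherwise every point has a ball avoided by b at all admissible late indices. *)
  pose (I := {q : X & {rN : R * nat | 0 < fst rN /\
     forall j, (snd rN <= j)%nat -> S (fst rN) j -> fst rN <= d (b j) q}}).
  pose (rad := fun i : I => fst (proj1_sig (projT2 i))).
  pose (late := fun i : I => snd (proj1_sig (projT2 i))).
  pose (U := fun (i : I) (y : X) => d (projT1 i) y < rad i).
  assert (Hopen : forall i, open_set d (U i)).
  { intros i y Hy. exists (rad i - d (projT1 i) y). split; [unfold U in Hy; lra|].
    intros z Hz. unfold U. pose proof (dist_triangle (projT1 i) y z). lra. }
  assert (Hcov : forall y, exists i, U i y).
  { intros y.
    assert (H : exists r N, 0 < r /\ forall j, (N <= j)%nat -> S r j -> r <= d (b j) y).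
    { apply NNPP; intro H. apply Hno. exists y. intros r N Hr.
      apply NNPP; intro H2. apply H. exists r, N. split; auto. intros j Hj HS.
      apply Rnot_lt_le. intro Hlt. apply H2. exists j. auto. }
    destruct H as [r [N [Hr HN]]].
    exists (existT _ y (exist _ (r, N) (conj Hr HN))). unfold U, rad; simpl.
    now rewrite dist_xx. }
  destruct (X_compact I U Hopen Hcov) as [l Hl].
  assert (Hpos : forall i, In i l -> 0 < rad i).
  { intros i _. unfold rad. destruct (projT2 i) as [rN [H1 H2]]. exact H1. }
  destruct (fold_Rmin_pos_le rad l Hpos) as [Hr0 Hr0le].
  set (r0 := fold_right (fun a acc => Rmin (rad a) acc) 1 l) in *.
  set (N0 := fold_right (fun a acc => Nat.max (late a) acc) 0%nat l).
  destruct (Sinf r0 N0 Hr0) as [j [Hj HS]].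
  destruct (Hl (b j)) as [i [Hin HU]].
  assert (HNi : (late i <= N0)%nat) by (apply fold_max_ge; auto).
  assert (Hle : rad i <= d (b j) (projT1 i)).
  { apply (proj2 (proj2_sig (projT2 i))); [unfold late in HNi; lia|].
    apply (Smono r0); [apply Hr0le|]; assumption. }
  unfold U in HU. rewrite dist_sym in HU. lra.
Qed.

Definition joint_cluster (a b : nat -> X) (p q : X) : Prop :=
  forall r N, 0 < r -> exists j, (N <= j)%nat /\ d (a j) p < r /\ d (b j) q < r.

Lemma joint_cluster_exists (a b : nat -> X) : exists p q, joint_cluster a b p q.
Proof.
  destruct (cluster_point_along (fun _ _ => True) (fun _ _ _ _ H => H)
     (fun r N _ => ex_intro _ N (conj (le_n N) I)) a) as [p Hp].
  destruct (cluster_point_along (fun r j => d (a j) p < r)) with (b := b) as [q Hq].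
  - intros r r' j Hr H. lra.
  - intros r N Hr. destruct (Hp r N Hr) as [j [Hj [_ H]]]. eauto.
  - exists p, q. intros r N Hr. destruct (Hq r N Hr) as [j [Hj [Ha Hb]]]. eauto.
Qed.

Lemma joint_cluster_dist_le a b p q c :
  (forall j, d (a j) (b j) <= c) -> joint_cluster a b p q -> d p q <= c.
Proof.
  intros Hab Hpq. apply le_epsilon. intros r Hr.
  destruct (Hpq (r / 2) 0%nat ltac:(lra)) as [j [_ [Hp Hq]]].
  pose proof (Hab j).
  pose proof (dist_triangle p (a j) q).
  pose proof (dist_triangle (a j) (b j) q).
  rewrite (dist_sym p (a j)) in *. lra.
Qed.

Definition jump (xs : Z -> X) (k : Z) : R := d (f (xs k)) (xs (k + 1)%Z).

Definition fin_pseudo_orbit (del : R) (xs : Z -> X) : Prop :=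
  (forall k, jump xs k <= del) /\
  exists N : nat, forall k, (Z.of_nat N <= Z.abs k)%Z -> jump xs k = 0.

Definition splice (A B : Z -> X) (t k : Z) : X := if (k <? t)%Z then A k else B k.

Lemma splice_left A B t k : (k < t)%Z -> splice A B t k = A k.
Proof. intros H. unfold splice. now rewrite (proj2 (Z.ltb_lt _ _) H). Qed.

Lemma splice_right A B t k : (t <= k)%Z -> splice A B t k = B k.
Proof. intros H. unfold splice. now rewrite (proj2 (Z.ltb_ge _ _) H). Qed.

Lemma orbit_fin_pseudo_orbit del A : 0 <= del ->
  (forall k, f (A k) = A (k + 1)%Z) -> fin_pseudo_orbit del A.
Proof.
  intros Hdel HA. unfold fin_pseudo_orbit, jump. split.
  - intros k. now rewrite HA, dist_xx.
  - exists 0%nat. intros k _. now rewrite HA, dist_xx.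
Qed.

Lemma splice_fin_pseudo_orbit del A B t : 0 <= del ->
  (forall k, f (A k) = A (k + 1)%Z) -> fin_pseudo_orbit del B -> d (A t) (B t) <= del ->
  fin_pseudo_orbit del (splice A B t).
Proof.
  intros Hdel HA [HB [NB HB0]] Ht. unfold fin_pseudo_orbit, jump, splice in *. split.
  - intros k. destruct (Z.ltb_spec k t); destruct (Z.ltb_spec (k + 1) t).
    + now rewrite HA, dist_xx.
    + rewrite HA. now replace (k + 1)%Z with t by lia.
    + lia.
    + apply HB.
  - exists (Nat.max NB (Z.to_nat (Z.abs t) + 2)). intros k Hk.
    destruct (Z.ltb_spec k t); destruct (Z.ltb_spec (k + 1) t); try lia.
    + now rewrite HA, dist_xx.
    + apply HB0. lia.
Qed.

Lemma fin_pseudo_orbit_tends0 del xs : fin_pseudo_orbit del xs -> tends0_Z (jump xs).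
Proof.
  intros [_ [N HN]] e He. exists N. intros k Hk. now rewrite HN, Rabs_R0.
Qed.

(* [L_shadowing d f g] is [forall eps, 0 < eps -> exists del, 0 < del /\ shadows_at eps del]. *)
Definition shadows_at (eta del : R) : Prop :=
  forall xs : Z -> X, (forall k, jump xs k <= del) -> tends0_Z (jump xs) ->
    exists z, (forall k, d (zpow f g k z) (xs k) <= eta) /\
              tends0_Z (fun k => d (zpow f g k z) (xs k)).

Lemma shadows_at_fin_pseudo_orbit eta del xs : shadows_at eta del ->
  fin_pseudo_orbit del xs ->
  exists z, (forall k, d (zpow f g k z) (xs k) <= eta) /\
            tends0_Z (fun k => d (zpow f g k z) (xs k)).
Proof. intros Hsh Hxs. exact (Hsh xs (proj1 Hxs) (fin_pseudo_orbit_tends0 _ _ Hxs)). Qed.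

Lemma shadowing_connects e del u v s : 0 <= del -> shadows_at e del ->
  d u v <= del -> 0 < s ->
  exists w (K : nat), (1 <= K)%nat /\
    (forall m, (m < 0)%Z -> d (zpow f g m w) (zpow f g m u) <= e) /\
    (forall m, (0 <= m)%Z -> d (zpow f g m w) (zpow f g m v) <= e) /\
    d (zpow f g (- Z.of_nat K) w) (zpow f g (- Z.of_nat K) u) < s /\
    d (zpow f g (Z.of_nat K) w) (zpow f g (Z.of_nat K) v) < s.
Proof.
  intros Hdel Hsh Huv Hs.
  set (xs := splice (fun k => zpow f g k u) (fun k => zpow f g k v) 0).
  assert (Hxs : fin_pseudo_orbit del xs).
  { apply splice_fin_pseudo_orbit; auto; [intros k; now rewrite zpow_succ|].
    apply orbit_fin_pseudo_orbit; auto. intros k. now rewrite zpow_succ. }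
  destruct (shadows_at_fin_pseudo_orbit _ _ _ Hsh Hxs) as [w [Hw Hw0]].
  destruct (Hw0 s Hs) as [N HN].
  exists w, (S N). split; [lia|]. unfold xs in *.
  split; [|split; [|split]].
  - intros m Hm. specialize (Hw m). now rewrite splice_left in Hw.
  - intros m Hm. specialize (Hw m). now rewrite splice_right in Hw.
  - specialize (HN (- Z.of_nat (S N))%Z ltac:(lia)).
    rewrite splice_left, Rabs_right in HN by (lia || apply Rle_ge, dist_ge0). exact HN.
  - specialize (HN (Z.of_nat (S N)) ltac:(lia)).
    rewrite splice_right, Rabs_right in HN by (lia || apply Rle_ge, dist_ge0). exact HN.
Qed.

(* A pseudo-orbit that stays near the orbit of x and eventually equals it is
   shadowed by a point of V^s(x) and V^u(x), which must be x itself. *)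
Lemma shadowing_isolated_orbit eps x :
  (forall y, (Vs_eps d f eps x y /\ Vu_eps d g eps x y) <-> y = x) ->
  forall eta del (xi : Z -> X) c, shadows_at eta del -> fin_pseudo_orbit del xi ->
  c + eta <= eps ->
  (forall k, d (xi k) (zpow f g k x) <= c) ->
  (exists N : nat, forall k, (Z.of_nat N <= Z.abs k)%Z -> xi k = zpow f g k x) ->
  forall k, d (xi k) (zpow f g k x) <= eta.
Proof.
  intros Hx eta del xi c Hsh Hxi Hc Htube [N2 HN2].
  destruct (shadows_at_fin_pseudo_orbit _ _ _ Hsh Hxi) as [z [Hz Hz0]].
  assert (Hstable : forall r, 0 < r -> exists N : nat, forall k,
            (Z.of_nat N <= Z.abs k)%Z -> d (zpow f g k x) (zpow f g k z) < r).
  { intros r Hr. destruct (Hz0 r Hr) as [N1 HN1]. exists (Nat.max N1 N2). intros k Hk.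
    specialize (HN1 k ltac:(lia)). rewrite HN2, Rabs_right in HN1
      by (lia || apply Rle_ge, dist_ge0). now rewrite dist_sym. }
  assert (Hnear : forall k, d (zpow f g k x) (zpow f g k z) <= eps).
  { intros k. pose proof (Hz k). pose proof (Htube k).
    pose proof (dist_triangle (zpow f g k x) (xi k) (zpow f g k z)).
    rewrite (dist_sym (zpow f g k x)), (dist_sym (xi k)) in *. lra. }
  assert (Hzx : z = x).
  { apply (proj1 (Hx z)). split; split.
    - intros r Hr. destruct (Hstable r Hr) as [N HN]. exists N. intros n Hn.
      rewrite <- !zpow_of_nat, Rabs_right by apply Rle_ge, dist_ge0. apply HN. lia.
    - intros n. rewrite <- !zpow_of_nat. apply Hnear.
    - intros r Hr. destruct (Hstable r Hr) as [N HN]. exists N. intros n Hn.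
      rewrite <- !zpow_opp_of_nat, Rabs_right by apply Rle_ge, dist_ge0. apply HN. lia.
    - intros n. rewrite <- !zpow_opp_of_nat. apply Hnear. }
  subst z. intros k. rewrite dist_sym. apply Hz.
Qed.

Lemma connecting_segment e del u v s : 0 <= del -> shadows_at e del ->
  d u v <= del -> 0 < s ->
  exists w (K : nat) r, (1 <= K)%nat /\ 0 < r /\
  forall a b z c T,
    d (zpow f g T a) u < r -> d (zpow f g T b) v < r ->
    (forall k, d (zpow f g k a) (zpow f g k z) <= c) ->
    (forall k, d (zpow f g k b) (zpow f g k z) <= c) ->
    d (zpow f g (T - Z.of_nat K) a) (orbit_through w T (T - Z.of_nat K)) < 2 * s /\
    d (orbit_through w T (T + Z.of_nat K)) (zpow f g (T + Z.of_nat K) b) < 2 * s /\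
    forall k, (T - Z.of_nat K <= k <= T + Z.of_nat K)%Z ->
      d (orbit_through w T k) (zpow f g k z) <= e + s + c.
Proof.
  intros Hdel Hsh Huv Hs.
  destruct (shadowing_connects e del u v s Hdel Hsh Huv Hs)
    as [w [K [HK [Hneg [Hpos [Hentry Hexit]]]]]].
  destruct (zpow_continuous_upto K u s Hs) as [ru [Hru Hcu]].
  destruct (zpow_continuous_upto K v s Hs) as [rv [Hrv Hcv]].
  exists w, K, (Rmin ru rv). split; [exact HK|]. split; [now apply Rmin_pos|].
  intros a b z c T Ha Hb Haz Hbz. unfold orbit_through.
  assert (Cu : forall k, (Z.abs (k - T) <= Z.of_nat K)%Z ->
            d (zpow f g (k - T) u) (zpow f g k a) < s).
  { intros k Hk. rewrite (zpow_shift k T a). apply Hcu; auto.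
    rewrite dist_sym. eapply Rlt_le_trans; [exact Ha| apply Rmin_l]. }
  assert (Cv : forall k, (Z.abs (k - T) <= Z.of_nat K)%Z ->
            d (zpow f g (k - T) v) (zpow f g k b) < s).
  { intros k Hk. rewrite (zpow_shift k T b). apply Hcv; auto.
    rewrite dist_sym. eapply Rlt_le_trans; [exact Hb| apply Rmin_r]. }
  split; [|split].
  - pose proof (Cu (T - Z.of_nat K)%Z ltac:(lia)) as Hu.
    replace (T - Z.of_nat K - T)%Z with (- Z.of_nat K)%Z in * by lia.
    pose proof (dist_triangle (zpow f g (T - Z.of_nat K) a) (zpow f g (- Z.of_nat K) u)
                  (zpow f g (- Z.of_nat K) w)).
    rewrite (dist_sym (zpow f g (- Z.of_nat K) u) (zpow f g (- Z.of_nat K) w)),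
      (dist_sym (zpow f g (- Z.of_nat K) u)) in *. lra.
  - pose proof (Cv (T + Z.of_nat K)%Z ltac:(lia)) as Hv.
    replace (T + Z.of_nat K - T)%Z with (Z.of_nat K) in * by lia.
    pose proof (dist_triangle (zpow f g (Z.of_nat K) w) (zpow f g (Z.of_nat K) v)
                  (zpow f g (T + Z.of_nat K) b)). lra.
  - intros k Hk. destruct (Z_lt_le_dec (k - T) 0) as [Hl|Hl].
    + pose proof (Hneg _ Hl). pose proof (Cu k ltac:(lia)). pose proof (Haz k).
      pose proof (dist_triangle (zpow f g (k - T) w) (zpow f g (k - T) u) (zpow f g k a)).
      pose proof (dist_triangle (zpow f g (k - T) w) (zpow f g k a) (zpow f g k z)). lra.
    + pose proof (Hpos _ Hl). pose proof (Cv k ltac:(lia)). pose proof (Hbz k).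
      pose proof (dist_triangle (zpow f g (k - T) w) (zpow f g (k - T) v) (zpow f g k b)).
      pose proof (dist_triangle (zpow f g (k - T) w) (zpow f g k b) (zpow f g k z)). lra.
Qed.

Ltac case_splice :=
  unfold splice; repeat match goal with |- context [Z.ltb ?a ?b] => destruct (Z.ltb_spec a b) end.

(* The pseudo-orbit follows x, leaves it along [w1], follows y through time 0,
   and returns to x along [w2]. *)
Lemma excursion_dist_le eps eta del c x y w1 w2 T1 k1 T2 k2 :
  (forall y, (Vs_eps d f eps x y /\ Vu_eps d g eps x y) <-> y = x) ->
  shadows_at eta del -> 0 <= del -> c + eta <= eps ->
  (1 <= k1)%Z -> (1 <= k2)%Z -> (T1 + k1 <= 0 < T2 - k2)%Z ->
  (forall k, d (zpow f g k y) (zpow f g k x) <= c) ->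
  d (zpow f g (T1 - k1) x) (orbit_through w1 T1 (T1 - k1)) <= del ->
  d (orbit_through w1 T1 (T1 + k1)) (zpow f g (T1 + k1) y) <= del ->
  (forall k, (T1 - k1 <= k <= T1 + k1)%Z -> d (orbit_through w1 T1 k) (zpow f g k x) <= c) ->
  d (zpow f g (T2 - k2) y) (orbit_through w2 T2 (T2 - k2)) <= del ->
  d (orbit_through w2 T2 (T2 + k2)) (zpow f g (T2 + k2) x) <= del ->
  (forall k, (T2 - k2 <= k <= T2 + k2)%Z -> d (orbit_through w2 T2 k) (zpow f g k x) <= c) ->
  d y x <= eta.
Proof.
  intros Hx Hsh Hdel Hc Hk1 Hk2 Hord Hy In1 Out1 Tube1 In2 Out2 Tube2.
  assert (Hc0 : 0 <= c)
    by (pose proof (Hy 0%Z); pose proof (dist_ge0 (zpow f g 0 y) (zpow f g 0 x)); lra).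
  set (Xo := fun k => zpow f g k x).
  set (Yo := fun k => zpow f g k y).
  set (xi := splice Xo (splice (orbit_through w1 T1)
               (splice Yo (splice (orbit_through w2 T2) Xo (T2 + k2)) (T2 - k2))
               (T1 + k1)) (T1 - k1)).
  assert (Horb : forall u k, f (zpow f g k u) = zpow f g (k + 1) u)
    by (intros; now rewrite zpow_succ).
  assert (Hxi : fin_pseudo_orbit del xi).
  { unfold xi. apply splice_fin_pseudo_orbit; [lra|intros k; apply Horb| |].
    - apply splice_fin_pseudo_orbit; [lra|intros k; apply orbit_through_succ| |].
      + apply splice_fin_pseudo_orbit; [lra|intros k; apply Horb| |].
        * apply splice_fin_pseudo_orbit; [lra|intros k; apply orbit_through_succ| |].
          -- apply orbit_fin_pseudo_orbit; [lra|intros k; apply Horb].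
          -- exact Out2.
        * now rewrite splice_left by lia.
      + now rewrite splice_left by lia.
    - now rewrite splice_left by lia. }
  assert (Htube : forall k, d (xi k) (zpow f g k x) <= c).
  { intros k. unfold xi, Xo, Yo. case_splice;
      first [ lia | apply Tube1; lia | apply Tube2; lia | apply Hy | rewrite dist_xx; lra ]. }
  assert (Hends : exists N : nat, forall k, (Z.of_nat N <= Z.abs k)%Z -> xi k = zpow f g k x).
  { exists (Z.to_nat (Z.abs (T1 - k1)) + Z.to_nat (Z.abs (T2 + k2)) + 1)%nat.
    intros k Hk. unfold xi. case_splice; reflexivity || lia. }
  pose proof (shadowing_isolated_orbit eps x Hx eta del xi c Hsh Hxi Hc Htube Hends 0%Z) as H0.
  unfold xi in H0. now rewrite splice_right, splice_right, splice_left in H0 by lia.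
Qed.

Lemma Gamma_dist_le eps e1 d1 del x y p1 q1 p2 q2 eta :
  (forall y, (Vs_eps d f eps x y /\ Vu_eps d g eps x y) <-> y = x) ->
  L_shadowing d f g -> shadows_at e1 d1 -> 0 <= del -> del <= d1 -> del <= e1 ->
  0 < e1 -> 4 * e1 <= eps ->
  (forall k, d (zpow f g k x) (zpow f g k y) <= del) ->
  joint_cluster (fun j => zpow f g (- Z.of_nat j) x) (fun j => zpow f g (- Z.of_nat j) y) p1 q1 ->
  joint_cluster (fun j => zpow f g (Z.of_nat j) y) (fun j => zpow f g (Z.of_nat j) x) q2 p2 ->
  0 < eta -> d y x <= eta.
Proof.
  intros Hx HL Hsh1 Hdel Hdeld1 Hdele1 He1 Heps HG H1 H2 Heta.
  assert (HGsym : forall k, d (zpow f g k y) (zpow f g k x) <= del)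
    by (intros k; rewrite dist_sym; apply HG).
  assert (HGx : forall k, d (zpow f g k x) (zpow f g k x) <= del)
    by (intros k; now rewrite dist_xx).
  assert (Hp1q1 : d p1 q1 <= d1)
    by (apply Rle_trans with del; auto; eapply joint_cluster_dist_le; [|exact H1]; intros j; apply HG).
  assert (Hq2p2 : d q2 p2 <= d1)
    by (apply Rle_trans with del; auto; eapply joint_cluster_dist_le; [|exact H2]; intros j; apply HGsym).
  assert (Hd1 : 0 <= d1) by lra.
  (* The glued pseudo-orbit has jumps < 2 s <= deta and stays within
     e1 + s + del <= 3 e1 of the orbit of x. *)
  destruct (HL (Rmin eta e1) ltac:(apply Rmin_pos; lra)) as [deta [Hdeta Hsh]].
  pose proof (Rmin_l eta e1). pose proof (Rmin_r eta e1).
  set (s := Rmin (deta / 2) e1).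
  assert (Hs : 0 < s) by (apply Rmin_pos; lra).
  assert (Hs1 : s <= deta / 2) by apply Rmin_l.
  assert (Hs2 : s <= e1) by apply Rmin_r.
  destruct (connecting_segment e1 d1 p1 q1 s Hd1 Hsh1 Hp1q1 Hs)
    as [w1 [K1 [r1 [HK1 [Hr1 Seg1]]]]].
  destruct (connecting_segment e1 d1 q2 p2 s Hd1 Hsh1 Hq2p2 Hs)
    as [w2 [K2 [r2 [HK2 [Hr2 Seg2]]]]].
  destruct (H1 r1 K1 Hr1) as [j1 [Hj1 [Hx1 Hy1]]].
  destruct (H2 r2 (S K2) Hr2) as [j2 [Hj2 [Hy2 Hx2]]].
  destruct (Seg1 x y x del _ Hx1 Hy1 HGx HGsym) as [In1 [Out1 Tube1]].
  destruct (Seg2 y x x del _ Hy2 Hx2 HGsym HGx) as [In2 [Out2 Tube2]].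
  apply Rle_trans with (Rmin eta e1); [|lra].
  apply (excursion_dist_le eps (Rmin eta e1) deta (e1 + s + del) x y w1 w2
           (- Z.of_nat j1) (Z.of_nat K1) (Z.of_nat j2) (Z.of_nat K2));
    auto; try lra; try lia.
  intros k. pose proof (HGsym k). lra.
Qed.

End Dynamics.

Theorem mainTheorem12 (X : Type) (d : X -> X -> R) (f g : X -> X) :
  is_metric d -> compact_space d -> homeomorphism d f g ->
  L_shadowing d f g ->
  forall eps, 0 < eps -> exists del, 0 < del /\
    forall x : X,
      (forall y, (Vs_eps d f eps x y /\ Vu_eps d g eps x y) <-> y = x) ->
      (forall y, Gamma d f g del x y <-> y = x).
Proof.
  intros Hm Hc [Hfc [Hgc [Hgf Hfg]]] HL eps Heps.
  destruct (HL (eps / 4) ltac:(lra)) as [d1 [Hd1 Hsh1]].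
  exists (Rmin d1 (eps / 4)). split; [apply Rmin_pos; lra|].
  intros x Hx y. split; [|intros -> k; rewrite (dist_xx X d Hm); apply Rlt_le, Rmin_pos; lra].
  intros HG.
  destruct (joint_cluster_exists X d Hm Hc
              (fun j => zpow f g (- Z.of_nat j) x) (fun j => zpow f g (- Z.of_nat j) y))
    as [p1 [q1 H1]].
  destruct (joint_cluster_exists X d Hm Hc
              (fun j => zpow f g (Z.of_nat j) y) (fun j => zpow f g (Z.of_nat j) x))
    as [q2 [p2 H2]].
  apply (dist_eq0 X d Hm), Rle_antisym; [|apply (dist_ge0 X d Hm)].
  apply le_epsilon. intros eta Heta. rewrite Rplus_0_l.
  pose proof (Rmin_l d1 (eps / 4)). pose proof (Rmin_r d1 (eps / 4)).
  apply (Gamma_dist_le X d f g Hm Hfg Hgf Hfc Hgc eps (eps / 4) d1 (Rmin d1 (eps / 4))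
           x y p1 q1 p2 q2); auto; try lra.
  apply Rlt_le, Rmin_pos; lra.
Qed.
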